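(* Let $t$ be a positive rational number and let $G$ be a minimally $t$-tough split graph whose vertex set is partitioned into a clique $C$ and an independent set $I$. Let $e=uv$ be an edge with $u,v\in C$, and let $S\subseteq V(G)$ be a witness set for $e$ (in the sense defined in the context). Then \[ S=\big(C\setminus\{u,v\}\big)\cup\{w\in I \mid uw\in E(G),\ vw\in E(G)\}. \]
   Context: All graphs are finite, simple and undirected. A graph is split if its vertex set can be partitioned into a clique and an independent set. $\omega(H)$ denotes the number of components of $H$. A cutset of $G$ is a vertex set $S$ with $G-S$ disconnected. For positive real $t$, $G$ is $t$-tough if $\omega(G-S)\le |S|/t$ for every cutset $S$; the toughness $\tau(G)$ is the largest such $t$, with $\tau(K_n)=\infty$ for all $n\ge1$. $G$ is minimally $t$-tough if $\tau(G)=t$ and $\tau(G-e)<t$ for every edge $e$. For a minimally $t$-tough graph $G$ and an edge $e$, a witness set for $e$ is a set $S\subseteq V(G)$ such that either $e$ is a bridge of $G$ and $S=\emptyset$, or $e$ is not a bridge of $G$, $\omega(G-S)\le |S|/t$, $\omega((G-e)-S)>|S|/t$, and $e$ is a bridge in $G-S$. (For every edge of a minimally $t$-tough graph a witness set exists.) *)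

From mathcomp Require Import all_boot all_order all_algebra.
Set Implicit Arguments. Unset Strict Implicit. Unset Printing Implicit Defensive.
Import Order.TTheory GRing.Theory Num.Theory.
Local Open Scope ring_scope.

Section Graphs.
Variable T : finType.

Definition simple_graph (g : rel T) : Prop := symmetric g /\ irreflexive g.

Definition restr (g : rel T) (A : {set T}) : rel T :=
  fun x y => [&& x \in A, y \in A & g x y].

Definition comps (g : rel T) (A : {set T}) : {set {set T}} :=
  [set [set y in A | connect (restr g A) x y] | x in A].

Definition ncomp (g : rel T) (A : {set T}) : nat := #|comps g A|.

Definition del_edge (g : rel T) (u v : T) : rel T :=
  fun x y => g x y && ~~ (((x == u) && (y == v)) || ((x == v) && (y == u))).

Definition is_cutset (g : rel T) (S : {set T}) : Prop := (1 < ncomp g (~: S))%N.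

Definition tough (g : rel T) (t : rat) : Prop :=
  forall S : {set T}, is_cutset g S -> t * (ncomp g (~: S))%:R <= (#|S|)%:R.

(* tau(G) = t : t is the largest value for which G is t-tough
   (for complete graphs no such t exists, matching tau(K_n) = infinity) *)
Definition toughness_is (g : rel T) (t : rat) : Prop :=
  tough g t /\ forall t' : rat, tough g t' -> t' <= t.

Definition minimally_tough (g : rel T) (t : rat) : Prop :=
  toughness_is g t /\
  forall u v, g u v -> exists t0 : rat, toughness_is (del_edge g u v) t0 /\ t0 < t.

Definition is_bridge (g : rel T) (A : {set T}) (u v : T) : bool :=
  [&& u \in A, v \in A, g u v & (ncomp g A < ncomp (del_edge g u v) A)%N].

Definition witness_set (g : rel T) (t : rat) (u v : T) (S : {set T}) : Prop :=
  (is_bridge g setT u v /\ S = set0) \/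
  [/\ ~~ is_bridge g setT u v,
      t * (ncomp g (~: S))%:R <= (#|S|)%:R,
      (#|S|)%:R < t * (ncomp (del_edge g u v) (~: S))%:R
    & is_bridge g (~: S) u v].

Definition is_clique (g : rel T) (C : {set T}) : Prop :=
  forall x y, x \in C -> y \in C -> x != y -> g x y.

Definition is_independent (g : rel T) (I : {set T}) : Prop :=
  forall x y, x \in I -> y \in I -> ~~ g x y.

Definition split_partition (g : rel T) (C I : {set T}) : Prop :=
  [/\ C :&: I = set0, C :|: I = setT, is_clique g C & is_independent g I].

End Graphs.

From mathcomp Require Import all_boot all_order all_algebra.
Import Order.TTheory GRing.Theory Num.Theory.
Local Open Scope ring_scope.

(* Every common neighbour of u and v lies in S, for otherwise uv would not be
   a bridge of G - S; these are C \ {u, v} and the common neighbours in I.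
   Conversely, if some y in S and in I misses one of u, v, say v, then the
   only neighbour of y outside S is u.  Trading y for u in S gives a set S'
   of the same size with omega(G - S') >= omega((G - e) - S) > |S| / t,
   contradicting the t-toughness of G. *)

Set Implicit Arguments.
Unset Strict Implicit.

Lemma leq_card_imset_coarser (aT rT1 rT2 : finType) (A : {pred aT})
    (f : aT -> rT1) (k : aT -> rT2) :
  {in A &, forall a b, k a = k b -> f a = f b} -> (#|f @: A| <= #|k @: A|)%N.
Proof.
move=> fk; pose P := [set (k a, f a) | a in A].
have -> : f @: A = snd @: P by rewrite -imset_comp.
have -> : k @: A = fst @: P by rewrite -imset_comp.
rewrite [#|fst @: P|]card_in_imset ?leq_imset_card //.
by move=> _ _ /imsetP[a aA ->] /imsetP[b bA ->] /= kab; rewrite (fk a b) ?kab.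
Qed.

Lemma connect_homo (T1 T2 : finType) (e1 : rel T1) (e2 : rel T2) (h : T1 -> T2) :
  (forall a b, e1 a b -> connect e2 (h a) (h b)) ->
  forall a b, connect e1 a b -> connect e2 (h a) (h b).
Proof.
move=> he a _ /connectP[p ep ->]; elim: p a ep => //= b p IHp a /andP[ab /IHp].
exact/connect_trans/he.
Qed.

Section Components.
Variable T : finType.
Implicit Types (g : rel T) (A S : {set T}).

Definition comp g A x : {set T} := [set y in A | connect (restr g A) x y].

Lemma compsE g A : comps g A = comp g A @: A.
Proof. by []. Qed.

Lemma restr_sym g A : symmetric g -> symmetric (restr g A).
Proof. by move=> sg x y; rewrite /restr sg andbCA. Qed.

Lemma del_edge_sym g u v : symmetric g -> symmetric (del_edge g u v).
Proof.
move=> sg x y; rewrite /del_edge sg; congr (_ && ~~ _).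
by rewrite orbC andbC [X in _ || X]andbC.
Qed.

Lemma del_edge_off g u v p :
  p \in [set u; v] -> forall a b, g a b -> a != p -> b != p -> del_edge g u v a b.
Proof.
rewrite !inE /del_edge => /orP[]/eqP-> a b -> ua ub /=;
  by rewrite (negbTE ua) (negbTE ub) !andbF.
Qed.

Lemma mem_comp g A x : x \in A -> x \in comp g A x.
Proof. by move=> xA; rewrite inE xA connect0. Qed.

Lemma comp_connect g A x y :
  symmetric g -> connect (restr g A) x y -> comp g A x = comp g A y.
Proof.
move=> sg xy; apply/setP => z; rewrite !inE.
by rewrite (same_connect (sym_connect_sym (restr_sym A sg)) xy).
Qed.

Lemma ncomp_gt0 g A x : x \in A -> (0 < ncomp g A)%N.
Proof. by move=> xA; apply/card_gt0P; exists (comp g A x); apply: imset_f. Qed.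

Lemma leq_ncomp_homo g1 g2 A1 A2 (h : T -> T) :
  symmetric g2 -> A2 \subset h @: A1 ->
  (forall a b, restr g1 A1 a b -> connect (restr g2 A2) (h a) (h b)) ->
  (ncomp g2 A2 <= ncomp g1 A1)%N.
Proof.
move=> sg2 sub hom; rewrite /ncomp !compsE.
apply: leq_trans (subset_leq_card (imsetS (comp g2 A2) sub)) _.
rewrite -imset_comp; apply: leq_card_imset_coarser => a b aA bA eq_ab /=.
apply: comp_connect => //; apply: connect_homo hom _ _ _.
by have := mem_comp g1 bA; rewrite -eq_ab inE => /andP[].
Qed.

Lemma leq_ncomp_del_edge g A u v :
  symmetric g -> connect (restr (del_edge g u v) A) u v ->
  (ncomp (del_edge g u v) A <= ncomp g A)%N.
Proof.
move=> sg cuv; apply: (@leq_ncomp_homo _ _ _ _ id); first exact: del_edge_sym.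
  by rewrite imset_id.
move=> a b /and3P[aA bA gab].
case E: ((a == u) && (b == v) || (a == v) && (b == u)).
  case/orP: E => /andP[/eqP-> /eqP->] //.
  by rewrite (sym_connect_sym (restr_sym _ (del_edge_sym _ _ sg))).
by apply: connect1; rewrite /restr aA bA /del_edge gab E.
Qed.

Lemma bridge_common_neighbourN g A u v w :
  symmetric g -> irreflexive g -> is_bridge g A u v -> g u w -> g v w ->
  w \notin A.
Proof.
move=> sg ig /and4P[uA vA _ lt_uv] guw gvw; apply/negP => wA.
have wu : w != u by apply: contraTneq guw => ->; rewrite ig.
have wv : w != v by apply: contraTneq gvw => ->; rewrite ig.
have cuv : connect (restr (del_edge g u v) A) u v.
  apply: (@connect_trans _ _ w); apply: connect1.
    by rewrite /restr uA wA /del_edge guw eqxx (negbTE wv) (negbTE wu) !andbF.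
  by rewrite /restr vA wA /del_edge sg gvw (negbTE wv) (negbTE wu).
by move: lt_uv; rewrite ltnNge leq_ncomp_del_edge.
Qed.

Lemma leq_ncomp_swap g ge S x p :
  symmetric g -> symmetric ge ->
  (forall a b, g a b -> a != p -> b != p -> ge a b) ->
  p \notin S -> x \in S -> (forall w, w \notin S -> w != p -> ~~ g x w) ->
  (ncomp ge (~: S) <= ncomp g (~: (p |: S :\ x)))%N.
Proof.
move=> sg sge gge pS xS x_iso.
have xp : x != p by apply: contraNneq pS => <-.
have inS' a : (a \in ~: (p |: S :\ x)) = (a != p) && ((a == x) || (a \notin S)).
  by rewrite !inE negb_or negb_and negbK.
apply: (@leq_ncomp_homo _ _ _ _ (fun y => if y == x then p else y)) => //.
  apply/subsetP => y; rewrite inE => yS; apply/imsetP.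
  have [->|yp] := eqVneq y p; first by exists x; rewrite ?inS' ?eqxx ?xp.
  have yx : y != x by apply: contraNneq yS => ->.
  by exists y; rewrite ?inS' ?yp ?yS ?orbT // (negbTE yx).
move=> a b /and3P[]; rewrite !inS' => /andP[ap ax] /andP[bp bx] gab.
have [eax|nax] := eqVneq a x; have [ebx|nbx] := eqVneq b x.
- exact: connect0.
- by rewrite (negbTE nbx) /= in bx; move: (x_iso b bx bp); rewrite -eax gab.
- by rewrite (negbTE nax) /= in ax; move: (x_iso a ax ap); rewrite -ebx sg gab.
rewrite (negbTE nax) /= in ax; rewrite (negbTE nbx) /= in bx.
by apply: connect1; rewrite /restr !inE ax bx gge.
Qed.

Lemma tough_swap_bound g ge (t : rat) S x p :
  symmetric g -> symmetric ge -> 0 <= t -> tough g t ->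
  (forall a b, g a b -> a != p -> b != p -> ge a b) ->
  p \notin S -> x \in S -> (forall w, w \notin S -> w != p -> ~~ g x w) ->
  (1 < ncomp ge (~: S))%N -> t * (ncomp ge (~: S))%:R <= (#|S|)%:R.
Proof.
move=> sg sge t0 tg gge pS xS x_iso cutS.
have le_swap := leq_ncomp_swap sg sge gge pS xS x_iso.
have card_swap : #|p |: S :\ x| = #|S|.
  by rewrite cardsU1 !inE (negbTE pS) andbF (cardsD1 x S) xS.
rewrite -card_swap; apply: le_trans (tg _ (leq_trans cutS le_swap)).
by rewrite ler_wpM2l // ler_nat.
Qed.

End Components.

Section SplitGraphs.
Variables (T : finType) (g : rel T) (C I : {set T}).
Hypotheses (sg : symmetric g) (ig : irreflexive g) (gCI : split_partition g C I).

Lemma split_neighbour_independent y w : y \in I -> g y w -> w \in C.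
Proof.
case: gCI => _ CUI _ indI yI gyw; have : w \in C :|: I by rewrite CUI inE.
by rewrite in_setU => /orP[// | wI]; move: (indI y w yI wI); rewrite gyw.
Qed.

Lemma split_memI y : y \notin C -> y \in I.
Proof.
case: gCI => _ CUI _ _ yC; have : y \in C :|: I by rewrite CUI inE.
by rewrite in_setU (negbTE yC).
Qed.

Variables u v : T.
Hypotheses (uC : u \in C) (vC : v \in C).

Lemma split_common_neighbour w :
  w \in (C :\: [set u; v]) :|: [set w in I | g u w && g v w] -> g u w && g v w.
Proof.
case: gCI => _ _ clC _; rewrite !inE => /orP[/andP[/norP[wu wv] wC] | /andP[_ //]].
by rewrite !clC // eq_sym.
Qed.

Lemma split_bridge_common_neighbours A :
  is_bridge g A u v ->
  (C :\: [set u; v]) :|: [set w in I | g u w && g v w] \subset ~: A.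
Proof.
move=> br; apply/subsetP => w /split_common_neighbour/andP[uw vw].
by rewrite inE (bridge_common_neighbourN sg ig br uw vw).
Qed.

Lemma split_witness_sub (t : rat) (S : {set T}) :
  0 < t -> tough g t ->
  (#|S|)%:R < t * (ncomp (del_edge g u v) (~: S))%:R -> is_bridge g (~: S) u v ->
  S \subset (C :\: [set u; v]) :|: [set w in I | g u w && g v w].
Proof.
move=> t0 tg lt_S br; have := split_bridge_common_neighbours br.
rewrite setCK => /subsetP common_in_S.
have /and4P[uS vS _ lt_br] := br.
have cutS := leq_ltn_trans (ncomp_gt0 g uS) lt_br.
rewrite !inE in uS vS.
apply/subsetP => y yS.
have yu : y != u by apply: contraNneq uS => <-.
have yv : y != v by apply: contraNneq vS => <-.
have [yC | /split_memI yI] := boolP (y \in C); first by rewrite !inE negb_or yu yv yC.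
have adj p q : [set p; q] = [set u; v] -> g q y.
  move=> pq; apply/negP => nqy.
  have puv : p \in [set u; v] by rewrite -pq set21.
  have pS : p \notin S by move: puv; rewrite !inE => /orP[]/eqP->.
  have y_iso w : w \notin S -> w != p -> ~~ g y w.
    move=> wS wp; apply/negP => gyw.
    have wC := split_neighbour_independent yI gyw.
    have : w \notin C :\: [set p; q].
      by apply: contra wS => wCpq; apply: common_in_S; rewrite in_setU -pq wCpq.
    rewrite !inE wC (negbTE wp) andbT negbK => /eqP wq.
    by move: nqy; rewrite -wq sg gyw.
  move: lt_S; rewrite ltNge => /negP; apply.
  exact: tough_swap_bound sg (del_edge_sym u v sg) (ltW t0) tg
    (del_edge_off puv) pS yS y_iso cutS.
by rewrite !inE yI (adj u v) // (adj v u) ?orbT // setUC.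
Qed.

End SplitGraphs.

Theorem mainTheorem4 (T : finType) (g : rel T) (t : rat) (C I : {set T})
  (u v : T) (S : {set T}) :
  simple_graph g -> 0 < t -> minimally_tough g t ->
  split_partition g C I ->
  u \in C -> v \in C -> g u v ->
  witness_set g t u v S ->
  S = (C :\: [set u; v]) :|: [set w in I | g u w && g v w].
Proof.
move=> [sg ig] t0 [[tg _] _] gCI uC vC _ [[brT ->] | [_ _ lt_S br]].
  apply/esym/eqP; rewrite -subset0 -setCT.
  exact: (split_bridge_common_neighbours sg ig gCI uC vC brT).
apply/eqP; rewrite eqEsubset (split_witness_sub sg ig gCI uC vC t0 tg lt_S br) /=.
by rewrite -(setCK S) (split_bridge_common_neighbours sg ig gCI uC vC br).
Qed.
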